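(* Two pairs of increasing arithmetic progressions $(\alpha n+\beta,\ \gamma m+\delta)$ and $(\tilde\alpha n+\tilde\beta,\ \tilde\gamma m+\tilde\delta)$ (indices $n,m\in\mathbb N$) with irrational relative densities are topologically equivalent at $+\infty$ if and only if $$\frac{\alpha}{\gamma}=\frac{\tilde\alpha}{\tilde\gamma}\quad\text{and}\quad \frac{\beta-\delta}{\gamma}\equiv\frac{\tilde\beta-\tilde\delta}{\tilde\gamma}\pmod{\bigl(1,\tfrac{\alpha}{\gamma}\bigr)},$$ the latter meaning that the difference lies in the additive subgroup of $\mathbb R$ generated by $1$ and $\alpha/\gamma$.
   Context: For a pair of arithmetic progressions $(\alpha n+\beta,\ \gamma m+\delta)$ the relative density is $A=\alpha/\gamma$ and the normalized difference of the free terms is $\tau=(\beta-\delta)/\gamma$. Two pairs of sequences on the real line are topologically equivalent at $+\infty$ if there is a homeomorphism of the line defined in a neighborhood of $+\infty$ which maps the first sequence of the first pair to the first sequence of the second pair and the second sequence of the first pair to the second sequence of the second pair. *)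

From Stdlib Require Import Reals QArith.
Open Scope R_scope.

Definition AP (a b : R) (x : R) : Prop := exists n : nat, x = a * INR n + b.

(* Continuity at interior points of the open
   intervals is equivalent to continuity of the restrictions. *)
Definition homeo_at_infty (a b : R) (h g : R -> R) : Prop :=
  (forall x, a < x -> b < h x) /\
  (forall y, b < y -> a < g y) /\
  (forall x, a < x -> g (h x) = x) /\
  (forall y, b < y -> h (g y) = y) /\
  (forall x, a < x -> continuity_pt h x) /\
  (forall y, b < y -> continuity_pt g y).

Definition top_equiv_at_infty (X1 Y1 X2 Y2 : R -> Prop) : Prop :=
  exists (a b : R) (h g : R -> R),
    homeo_at_infty a b h g /\
    (forall x, a < x -> (X1 x <-> X2 (h x))) /\
    (forall x, a < x -> (Y1 x <-> Y2 (h x))).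

Definition irrational (r : R) : Prop := ~ exists q : Q, r = Q2R q.

Definition cong_mod_1A (A r s : R) : Prop :=
  exists k l : Z, r - s = IZR k + IZR l * A.

From Stdlib Require Import Reals QArith Lra Lia Ranalysis5.
Open Scope R_scope.

(* The converse direction is realised by an affine map.  For the direct one, a
   homeomorphism h near +oo is strictly monotone; it cannot decrease, since it
   sends the infinitely many terms of the first progression to terms of the
   other one.  An increasing bijection between tails of progressions shifts the
   indices, so the interleaving of the two sequences is preserved.  With
   A = alpha/gamma, that interleaving is the set of (i, j) with A i + c < j,
   where c = A n0 + tau - m0 depends on the starting indices.  Such a set
   determines the line: a different slope leaves a gap containing an integer,
   and a different intercept is detected because the fractional parts of the
   A i are dense when A is irrational.  Comparing the intercepts gives
   tau - tau' in Z + A Z. *)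

Definition is_nat (r : R) : Prop := exists n : nat, r = INR n.

Lemma exists_nat_gt (x : R) : exists n : nat, x < INR n.
Proof.
  destruct (INR_archimed 1 x) as [n Hn]; [lra|].
  exists n. lra.
Qed.

Lemma exists_nat_line_gt (A c y : R) : 0 < A -> exists n : nat, y < A * INR n + c.
Proof.
  intro hA. destruct (exists_nat_gt ((y - c) / A)) as [n Hn].
  exists n. apply (Rmult_lt_compat_l A) in Hn; [|exact hA].
  replace (A * ((y - c) / A)) with (y - c) in Hn by (field; lra). lra.
Qed.

Lemma INR_Z_to_nat (z : Z) : (0 <= z)%Z -> INR (Z.to_nat z) = IZR z.
Proof. intro hz. rewrite INR_IZR_INZ, Znat.Z2Nat.id; auto. Qed.

Lemma is_nat_IZR (z : Z) : -1 < IZR z -> is_nat (IZR z).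
Proof.
  intro hz. exists (Z.to_nat z). rewrite INR_Z_to_nat; [reflexivity|].
  apply lt_IZR in hz. lia.
Qed.

Lemma is_nat_shift (r : R) (L : Z) :
  Rabs (IZR L) - 1 < r -> (is_nat r <-> is_nat (r + IZR L)).
Proof.
  intro hr.
  pose proof (Rle_abs (IZR L)). pose proof (Rle_abs (- IZR L)). rewrite Rabs_Ropp in *.
  split.
  - intros [n ->]. rewrite INR_IZR_INZ, <- plus_IZR in *. apply is_nat_IZR.
    rewrite plus_IZR. lra.
  - intros [n Hn].
    replace r with (IZR (Z.of_nat n - L)) by (rewrite minus_IZR, <- INR_IZR_INZ; lra).
    apply is_nat_IZR. rewrite minus_IZR, <- INR_IZR_INZ. lra.
Qed.

Lemma AP_iff_is_nat (al be x : R) : al <> 0 -> (AP al be x <-> is_nat ((x - be) / al)).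
Proof.
  intro hal. split; intros [n Hn]; exists n.
  - rewrite Hn. field. exact hal.
  - rewrite <- Hn. field. exact hal.
Qed.

Lemma AP_term_lt (al be : R) (n m : nat) :
  0 < al -> (al * INR n + be < al * INR m + be <-> (n < m)%nat).
Proof.
  intro hal. split; intro H.
  - apply INR_lt, (Rmult_lt_reg_l al); lra.
  - apply lt_INR in H. nra.
Qed.

Lemma AP_tail_gt (al be a : R) (n0 i : nat) :
  0 < al -> a < al * INR n0 + be -> a < al * INR (n0 + i) + be.
Proof. intros hal h0. rewrite plus_INR. pose proof (pos_INR i). nra. Qed.

(** * Density of the multiples of an irrational number modulo 1 *)

Definition int_comb (A x : R) : Prop := exists k l : Z, x = IZR k + IZR l * A.

Lemma int_comb_1 (A : R) : int_comb A 1.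
Proof. exists 1%Z, 0%Z. simpl. ring. Qed.

Lemma int_comb_A (A : R) : int_comb A A.
Proof. exists 0%Z, 1%Z. simpl. ring. Qed.

Lemma int_comb_sub (A x y : R) : int_comb A x -> int_comb A y -> int_comb A (x - y).
Proof.
  intros [k [l ->]] [k' [l' ->]]. exists (k - k')%Z, (l - l')%Z.
  rewrite !minus_IZR. ring.
Qed.

Lemma int_comb_mul (A x : R) (m : Z) : int_comb A x -> int_comb A (IZR m * x).
Proof.
  intros [k [l ->]]. exists (m * k)%Z, (m * l)%Z. rewrite !mult_IZR. ring.
Qed.

Lemma irrational_int_mul_eq_IZR (A : R) (m p : Z) : irrational A -> IZR m * A = IZR p -> m = 0%Z.
Proof.
  intros hA E. destruct m as [|q|q]; [reflexivity| exfalso; apply hA ..].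
  - exists (p # q). unfold Q2R; simpl.
    assert (0 < IZR (Z.pos q)) by (apply IZR_lt; lia).
    rewrite <- E. field. lra.
  - exists (- p # q). unfold Q2R; simpl.
    assert (0 < IZR (Z.pos q)) by (apply IZR_lt; lia).
    rewrite opp_IZR, <- E, IZR_NEG. field. lra.
Qed.

Lemma exists_remainder (x b : R) : 0 < b -> exists m : Z, 0 <= x - IZR m * b < b.
Proof.
  intro hb. exists (Zfloor (x / b)).
  destruct (Zfloor_bound (x / b)) as [H1 H2].
  assert (x = x / b * b) by (field; lra). nra.
Qed.

Lemma int_comb_between (A b : R) :
  irrational A -> int_comb A b -> 0 < b -> exists x, int_comb A x /\ 0 < x < b.
Proof.
  intros hA Gb hb.
  destruct (exists_remainder 1 b hb) as [m1 H1].
  destruct (exists_remainder A b hb) as [m2 H2].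
  destruct (Req_dec (1 - IZR m1 * b) 0) as [E1|N1].
  2:{ exists (1 - IZR m1 * b). split; [|lra].
      apply int_comb_sub; [apply int_comb_1 | apply int_comb_mul, Gb]. }
  destruct (Req_dec (A - IZR m2 * b) 0) as [E2|N2].
  2:{ exists (A - IZR m2 * b). split; [|lra].
      apply int_comb_sub; [apply int_comb_A | apply int_comb_mul, Gb]. }
  exfalso.
  (* b divides both 1 and A, which makes A = m2 / m1 rational *)
  assert (Hm1 : m1 = 0%Z).
  { apply (irrational_int_mul_eq_IZR A m1 m2 hA).
    replace A with (IZR m2 * b) by lra.
    replace (IZR m1 * (IZR m2 * b)) with (IZR m2 * (IZR m1 * b)) by ring.
    replace (IZR m1 * b) with 1 by lra. ring. }
  subst m1. simpl in E1. lra.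
Qed.

Lemma int_comb_arbitrarily_small (A eps : R) :
  irrational A -> 0 < eps -> exists x, int_comb A x /\ 0 < x < eps.
Proof.
  intros hA heps.
  assert (Hn : forall n, exists x, int_comb A x /\ 0 < x /\ INR (S n) * x <= 1).
  { induction n as [|n [x [Gx [x0 Hx]]]].
    - exists 1. split; [apply int_comb_1 | simpl; lra].
    - destruct (int_comb_between A x hA Gx x0) as [y [Gy Hy]].
      assert (Hz : exists z, int_comb A z /\ 0 < z /\ 2 * z <= x).
      { destruct (Rle_lt_dec (2 * y) x).
        - exists y. split; [exact Gy | lra].
        - exists (x - y). split; [apply int_comb_sub; assumption | lra]. }
      destruct Hz as [z [Gz [z0 Hz]]].
      exists z. split; [exact Gz|split; [exact z0|]].
      rewrite !S_INR in *. pose proof (pos_INR n).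
      assert (0 <= INR n * z) by (apply Rmult_le_pos; lra).
      assert (0 <= (INR n + 1) * (x - 2 * z)) by (apply Rmult_le_pos; lra).
      lra. }
  destruct (INR_archimed eps 1 heps) as [n Hn'].
  destruct (Hn n) as [x [Gx [x0 Hx]]].
  exists x. split; [exact Gx|split; [exact x0|]].
  rewrite S_INR in Hx. pose proof (pos_INR n). nra.
Qed.

Lemma exists_int_plus_nat_mult (t x : R) :
  0 < t -> exists (z : Z) (s : nat), x < IZR z + INR s * t <= x + t.
Proof.
  intro ht. destruct (Zfloor_bound x) as [Hz1 Hz2].
  set (w := (x - IZR (Zfloor x)) / t).
  assert (Hw : x - IZR (Zfloor x) = w * t) by (unfold w; field; lra).
  assert (w0 : 0 <= w) by nra.
  destruct (archimed w) as [Hu1 Hu2].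
  destruct (is_nat_IZR (up w)) as [s Hs]; [lra|].
  exists (Zfloor x), s. rewrite <- Hs. nra.
Qed.

Lemma nat_multiples_dense_mod_1 (A x d : R) :
  irrational A -> 0 < d -> exists (i : nat) (z : Z), A * INR i + x < IZR z <= A * INR i + x + d.
Proof.
  intros hA hd.
  destruct (int_comb_arbitrarily_small A (Rmin d 1) hA) as [t [[k [l Et]] [t0 Ht]]].
  { apply Rmin_glb_lt; lra. }
  pose proof (Rmin_l d 1). pose proof (Rmin_r d 1).
  (* the multiples s t of t = k + l A are, up to integers, multiples s l of A *)
  destruct (Z.lt_trichotomy l 0) as [Hl|[Hl|Hl]].
  - destruct (exists_int_plus_nat_mult t x t0) as [z [s Hs]].
    exists (s * Z.to_nat (- l))%nat, (z + Z.of_nat s * k)%Z.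
    rewrite mult_INR, INR_Z_to_nat, opp_IZR, plus_IZR, mult_IZR, <- INR_IZR_INZ by lia.
    rewrite Et in Hs. lra.
  - subst l. exfalso. rewrite Rmult_0_l, Rplus_0_r in Et.
    assert (0 < k < 1)%Z by (split; apply lt_IZR; lra). lia.
  - destruct (exists_int_plus_nat_mult t (- x - d) t0) as [z [s Hs]].
    exists (s * Z.to_nat l)%nat, (- z - Z.of_nat s * k)%Z.
    rewrite mult_INR, INR_Z_to_nat, minus_IZR, opp_IZR, mult_IZR, <- INR_IZR_INZ by lia.
    rewrite Et in Hs. lra.
Qed.

(** * A line with irrational slope is determined by the lattice points above it *)

Lemma nat_between_diverging_lines (A A' c c' : R) :
  0 < A -> A < A' -> exists i j : nat, A * INR i + c < INR j <= A' * INR i + c'.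
Proof.
  intros hA hAA'.
  destruct (exists_nat_line_gt A c (-1) hA) as [N0 H0].
  destruct (exists_nat_line_gt (A' - A) (c' - c) 1) as [N1 H1]; [lra|].
  assert (0 <= (A' - A) * INR N0) by (apply Rmult_le_pos; [lra | apply pos_INR]).
  assert (0 <= A * INR N1) by (apply Rmult_le_pos; [lra | apply pos_INR]).
  set (u := A * INR (N0 + N1) + c).
  destruct (archimed u) as [Hu1 Hu2].
  destruct (is_nat_IZR (up u)) as [j Hj]; [unfold u in *; rewrite plus_INR in *; lra|].
  exists (N0 + N1)%nat, j. rewrite <- Hj. unfold u in *. rewrite plus_INR in *. lra.
Qed.

Lemma nat_between_parallel_lines (A c c' : R) :
  0 < A -> irrational A -> c < c' -> exists i j : nat, A * INR i + c < INR j <= A * INR i + c'.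
Proof.
  intros hA hirr hc.
  destruct (exists_nat_line_gt A c (-1) hA) as [N HN].
  destruct (nat_multiples_dense_mod_1 A (A * INR N + c) (c' - c) hirr) as [i [z Hz]]; [lra|].
  assert (0 <= A * INR i) by (apply Rmult_le_pos; [lra | apply pos_INR]).
  destruct (is_nat_IZR z) as [j Hj]; [lra|].
  exists (i + N)%nat, j. rewrite plus_INR, <- Hj. lra.
Qed.

Lemma lines_determined (A A' c c' : R) :
  0 < A -> 0 < A' -> irrational A ->
  (forall i j : nat, A * INR i + c < INR j <-> A' * INR i + c' < INR j) ->
  A = A' /\ c = c'.
Proof.
  intros hA hA' hirr H.
  assert (EA : A = A').
  { destruct (Rtotal_order A A') as [Hlt|[E|Hgt]]; [exfalso | exact E | exfalso].
    - destruct (nat_between_diverging_lines A A' c c' hA Hlt) as [i [j [Hi Hj]]].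
      apply H in Hi. lra.
    - destruct (nat_between_diverging_lines A' A c' c hA' Hgt) as [i [j [Hi Hj]]].
      apply H in Hi. lra. }
  subst A'. split; [reflexivity|].
  destruct (Rtotal_order c c') as [Hlt|[E|Hgt]]; [exfalso | exact E | exfalso].
  - destruct (nat_between_parallel_lines A c c' hA hirr Hlt) as [i [j [Hi Hj]]].
    apply H in Hi. lra.
  - destruct (nat_between_parallel_lines A c' c hA hirr Hgt) as [i [j [Hi Hj]]].
    apply H in Hi. lra.
Qed.

(** * Homeomorphisms near +oo and progressions *)

Lemma convex_comb_gt (a p x t : R) : a < p -> a < x -> 0 <= t <= 1 -> a < (1 - t) * p + t * x.
Proof.
  intros hp hx ht.
  destruct (Rlt_le_dec t 1).
  - assert (0 < (1 - t) * (p - a)) by (apply Rmult_lt_0_compat; lra).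
    assert (0 <= t * (x - a)) by (apply Rmult_le_pos; lra). lra.
  - replace t with 1 by lra. lra.
Qed.

(* Moving (p, q) to (x, y) through pairs u < v in (a, +oo), the sign of
   h v - h u cannot change without h identifying two distinct points. *)
Lemma continuous_injective_order_preserved (a : R) (h : R -> R) :
  (forall x y, a < x -> a < y -> h x = h y -> x = y) ->
  (forall x, a < x -> continuity_pt h x) ->
  forall p q x y, a < p -> p < q -> a < x -> x < y -> h p < h q -> h x < h y.
Proof.
  intros Hinj Hc p q x y hp hpq hx hxy hh.
  destruct (Rtotal_order (h x) (h y)) as [|[E|Hgt]]; [assumption | exfalso; apply Hinj in E; lra | exfalso].
  set (u := fun t => (1 - t) * p + t * x).
  set (v := fun t => (1 - t) * q + t * y).
  assert (Hu : forall t, 0 <= t <= 1 -> a < u t) by (intros; apply convex_comb_gt; lra).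
  assert (Hv : forall t, 0 <= t <= 1 -> a < v t) by (intros; apply convex_comb_gt; lra).
  assert (Huv : forall t, 0 <= t <= 1 -> u t < v t).
  { intros t ht. assert (0 < (1 - t) * (q - p) + t * (y - x)) by (apply convex_comb_gt; lra).
    unfold u, v. lra. }
  destruct (IVT_interv (fun t => h (u t) - h (v t)) 0 1) as [t [ht Ht]].
  - intros t ht. apply continuity_pt_minus; apply continuity_pt_comp;
      try (apply Hc; auto); unfold u, v; reg.
  - lra.
  - unfold u, v. replace ((1 - 0) * p + 0 * x) with p by ring.
    replace ((1 - 0) * q + 0 * y) with q by ring. lra.
  - unfold u, v. replace ((1 - 1) * p + 1 * x) with x by ring.
    replace ((1 - 1) * q + 1 * y) with y by ring. lra.
  - assert (E : u t = v t) by (apply Hinj; auto; lra).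
    specialize (Huv t ht). lra.
Qed.

Lemma continuous_injective_monotone (a : R) (h : R -> R) :
  (forall x y, a < x -> a < y -> h x = h y -> x = y) ->
  (forall x, a < x -> continuity_pt h x) ->
  (forall x y, a < x -> x < y -> h x < h y) \/ (forall x y, a < x -> x < y -> h y < h x).
Proof.
  intros Hinj Hc.
  destruct (Rtotal_order (h (a + 1)) (h (a + 2))) as [L|[E|G]].
  - left. intros x y hx hxy.
    apply (continuous_injective_order_preserved a h Hinj Hc (a + 1) (a + 2)); auto; lra.
  - apply Hinj in E; lra.
  - right. intros x y hx hxy.
    enough (- h x < - h y) by lra.
    apply (continuous_injective_order_preserved a (fun x => - h x)) with (a + 1) (a + 2);
      try lra.
    + intros u w hu hw E. apply Hinj; auto. lra.
    + intros u hu. apply continuity_pt_opp, Hc, hu.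
Qed.

Lemma strictly_increasing_reflect (a : R) (h : R -> R) :
  (forall x y, a < x -> x < y -> h x < h y) ->
  forall x y, a < x -> a < y -> h x < h y -> x < y.
Proof.
  intros inc x y hx hy hh.
  destruct (Rtotal_order x y) as [|[E|G]]; [assumption | subst; lra |].
  specialize (inc y x hy G). lra.
Qed.

Lemma no_decreasing_AP_map (al be al' be' a : R) (h : R -> R) :
  0 < al -> 0 < al' ->
  (forall x y, a < x -> x < y -> h y < h x) ->
  (forall x, a < x -> AP al be x -> AP al' be' (h x)) -> False.
Proof.
  intros hal hal' dec HX.
  destruct (exists_nat_line_gt al be a hal) as [n0 Hn0].
  pose proof (fun i => AP_tail_gt al be a n0 i hal Hn0) as Hterm.
  destruct (HX _ Hn0 (ex_intro _ n0 eq_refl)) as [K HK].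
  (* the indices of the images would form a strictly decreasing sequence in nat *)
  assert (Hind : forall i, exists k,
    h (al * INR (n0 + i) + be) = al' * INR k + be' /\ (k + i <= K)%nat).
  { induction i as [|i [k [Hk Hki]]].
    - exists K. rewrite Nat.add_0_r. split; [exact HK | lia].
    - destruct (HX _ (Hterm (S i)) (ex_intro _ _ eq_refl)) as [k' Hk'].
      exists k'. split; [exact Hk'|].
      enough (k' < k)%nat by lia.
      apply (AP_term_lt al' be'); [exact hal'|]. rewrite <- Hk, <- Hk'.
      apply dec; [apply Hterm|]. apply AP_term_lt; [exact hal | lia]. }
  destruct (Hind (S K)) as [k [_ Hk]]. lia.
Qed.

Lemma homeo_AP_map_increasing (al be al' be' a b : R) (h g : R -> R) :
  0 < al -> 0 < al' -> homeo_at_infty a b h g ->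
  (forall x, a < x -> AP al be x -> AP al' be' (h x)) ->
  forall x y, a < x -> x < y -> h x < h y.
Proof.
  intros hal hal' [_ [_ [Hgh [_ [Hc _]]]]] HX.
  assert (Hinj : forall x y, a < x -> a < y -> h x = h y -> x = y).
  { intros x y hx hy E. rewrite <- (Hgh x hx), <- (Hgh y hy), E. reflexivity. }
  destruct (continuous_injective_monotone a h Hinj Hc) as [inc|dec]; [exact inc | exfalso].
  exact (no_decreasing_AP_map al be al' be' a h hal hal' dec HX).
Qed.

Lemma increasing_AP_map_shift (al be al' be' a b : R) (h g : R -> R) :
  0 < al -> 0 < al' ->
  (forall x y, a < x -> x < y -> h x < h y) ->
  (forall x, a < x -> b < h x) ->
  (forall y, b < y -> a < g y /\ h (g y) = y) ->
  (forall x, a < x -> (AP al be x <-> AP al' be' (h x))) ->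
  forall n0, a < al * INR n0 + be ->
  exists k0, forall i, h (al * INR (n0 + i) + be) = al' * INR (k0 + i) + be'.
Proof.
  intros hal hal' inc Hab Hg HX n0 Hn0.
  pose proof (fun i => AP_tail_gt al be a n0 i hal Hn0) as Hterm.
  destruct (proj1 (HX _ Hn0) (ex_intro _ n0 eq_refl)) as [k0 Hk0].
  exists k0. induction i as [|i IH]; [rewrite !Nat.add_0_r; exact Hk0|].
  destruct (proj1 (HX _ (Hterm (S i))) (ex_intro _ _ eq_refl)) as [k Hk].
  rewrite Hk.
  destruct (Nat.eq_dec k (k0 + S i)) as [->|Hne]; [reflexivity | exfalso].
  assert (Hlt : (k0 + i < k)%nat).
  { apply (AP_term_lt al' be'); [exact hal'|]. rewrite <- IH, <- Hk.
    apply inc; [apply Hterm | apply AP_term_lt; [exact hal | lia]]. }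
  (* the skipped term y would have a preimage strictly between two consecutive terms *)
  set (y := al' * INR (k0 + S i) + be').
  assert (Hy : b < y).
  { specialize (Hab _ (Hterm i)). rewrite IH in Hab.
    assert (al' * INR (k0 + i) + be' < y) by (apply AP_term_lt; [exact hal' | lia]). lra. }
  destruct (Hg y Hy) as [Hgy Hhgy].
  destruct (proj2 (HX _ Hgy)) as [m Hm]; [rewrite Hhgy; exists (k0 + S i)%nat; reflexivity|].
  assert (L1 : al * INR (n0 + i) + be < g y).
  { apply (strictly_increasing_reflect a h inc); [apply Hterm | exact Hgy |].
    rewrite IH, Hhgy. apply AP_term_lt; [exact hal' | lia]. }
  assert (L2 : g y < al * INR (n0 + S i) + be).
  { apply (strictly_increasing_reflect a h inc); [exact Hgy | apply Hterm |].
    rewrite Hhgy, Hk. apply AP_term_lt; [exact hal' | lia]. }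
  rewrite Hm in L1, L2. apply AP_term_lt in L1, L2; [|exact hal ..]. lia.
Qed.

Lemma AP_terms_lt_iff_line (al be ga de : R) (n m i j : nat) :
  0 < ga ->
  (al * INR (n + i) + be < ga * INR (m + j) + de <->
   al / ga * INR i + (al / ga * INR n + (be - de) / ga - INR m) < INR j).
Proof.
  intro hga. rewrite !plus_INR.
  assert (E : ga * (al / ga * INR i + (al / ga * INR n + (be - de) / ga - INR m))
              = al * (INR n + INR i) + be - de - ga * INR m) by (field; lra).
  split; intro H.
  - apply (Rmult_lt_reg_l ga); [exact hga|]. rewrite E. lra.
  - apply (Rmult_lt_compat_l ga) in H; [|exact hga]. rewrite E in H. lra.
Qed.

Lemma top_equiv_AP_invariants (al be ga de al' be' ga' de' : R) :
  0 < al -> 0 < ga -> 0 < al' -> 0 < ga' -> irrational (al / ga) ->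
  top_equiv_at_infty (AP al be) (AP ga de) (AP al' be') (AP ga' de') ->
  al / ga = al' / ga' /\ cong_mod_1A (al / ga) ((be - de) / ga) ((be' - de') / ga').
Proof.
  intros hal hga hal' hga' hirr [a [b [h [g [Hh [HX HY]]]]]].
  pose proof (homeo_AP_map_increasing al be al' be' a b h g hal hal' Hh
                (fun x hx => proj1 (HX x hx))) as inc.
  destruct Hh as [Hab [Hba [_ [Hhg _]]]].
  assert (Hg : forall y, b < y -> a < g y /\ h (g y) = y) by (intros; split; auto).
  destruct (exists_nat_line_gt al be a hal) as [n0 Hn0].
  destruct (exists_nat_line_gt ga de a hga) as [m0 Hm0].
  destruct (increasing_AP_map_shift al be al' be' a b h g hal hal' inc Hab Hg HX n0 Hn0)
    as [k0 Hk0].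
  destruct (increasing_AP_map_shift ga de ga' de' a b h g hga hga' inc Hab Hg HY m0 Hm0)
    as [l0 Hl0].
  assert (Hlines : forall i j : nat,
    al / ga * INR i + (al / ga * INR n0 + (be - de) / ga - INR m0) < INR j <->
    al' / ga' * INR i + (al' / ga' * INR k0 + (be' - de') / ga' - INR l0) < INR j).
  { intros i j. rewrite <- !AP_terms_lt_iff_line, <- Hk0, <- Hl0 by assumption.
    pose proof (AP_tail_gt al be a n0 i hal Hn0).
    pose proof (AP_tail_gt ga de a m0 j hga Hm0).
    split; [apply inc | apply (strictly_increasing_reflect a h inc)]; assumption. }
  destruct (lines_determined _ _ _ _ (Rdiv_lt_0_compat _ _ hal hga)
              (Rdiv_lt_0_compat _ _ hal' hga') hirr Hlines) as [EA Ec].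
  split; [exact EA|].
  exists (Z.of_nat m0 - Z.of_nat l0)%Z, (Z.of_nat k0 - Z.of_nat n0)%Z.
  rewrite !minus_IZR, <- !INR_IZR_INZ, <- EA in *. lra.
Qed.

Lemma affine_homeo_at_infty (s t a : R) :
  0 < s -> homeo_at_infty a (s * a + t) (fun x => s * x + t) (fun y => (y - t) / s).
Proof.
  intro hs. repeat split; intros.
  - apply Rplus_lt_compat_r, Rmult_lt_compat_l; assumption.
  - apply (Rmult_lt_reg_l s); [exact hs|].
    replace (s * ((y - t) / s)) with (y - t) by (field; lra). lra.
  - field. lra.
  - field. lra.
  - reg.
  - reg.
Qed.

Lemma index_gt_of_gt (al be c x : R) : 0 < al -> be + al * c < x -> c < (x - be) / al.
Proof.
  intros hal hx. apply (Rmult_lt_reg_l al); [exact hal|].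
  replace (al * ((x - be) / al)) with (x - be) by (field; lra). lra.
Qed.

Lemma top_equiv_of_invariants (al be ga de al' be' ga' de' : R) :
  0 < al -> 0 < ga -> 0 < al' -> 0 < ga' -> al / ga = al' / ga' ->
  cong_mod_1A (al / ga) ((be - de) / ga) ((be' - de') / ga') ->
  top_equiv_at_infty (AP al be) (AP ga de) (AP al' be') (AP ga' de').
Proof.
  intros hal hga hal' hga' EA [K [L EKL]].
  set (s := ga' / ga).
  set (t := de' - ga' * IZR K - s * de).
  (* the affine map sends al n + be to al' (n + L) + be' and ga m + de to ga' (m - K) + de' *)
  assert (Hy : forall x, (s * x + t - de') / ga' = (x - de) / ga + IZR (- K)).
  { intro x. unfold t, s. rewrite opp_IZR. field. lra. }
  assert (Hx : forall x, (s * x + t - be') / al' = (x - be) / al + IZR L).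
  { intro x. unfold t, s.
    replace al' with (ga' * (al / ga)) by (rewrite EA; field; lra).
    assert (Ebe : (be' - de') / ga' = (be - de) / ga - IZR K - IZR L * (al / ga)) by lra.
    replace be' with (de' + ga' * ((be' - de') / ga')) by (field; lra).
    rewrite Ebe.
    field. repeat split; lra. }
  set (a := Rmax (de + ga * (Rabs (IZR (- K)) - 1)) (be + al * (Rabs (IZR L) - 1))).
  exists a, (s * a + t), (fun x => s * x + t), (fun y => (y - t) / s).
  split; [apply affine_homeo_at_infty, Rdiv_lt_0_compat; assumption|].
  split; intros x hx; apply Rmax_Rlt in hx as [hxK hxL]; cbv beta.
  - rewrite !AP_iff_is_nat, Hx by lra.
    apply is_nat_shift, index_gt_of_gt; assumption.
  - rewrite !AP_iff_is_nat, Hy by lra.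
    apply is_nat_shift, index_gt_of_gt; assumption.
Qed.

Theorem lemma6 (al be ga de al' be' ga' de' : R)
  (hal : 0 < al) (hga : 0 < ga) (hal' : 0 < al') (hga' : 0 < ga')
  (hirr : irrational (al / ga)) (hirr' : irrational (al' / ga')) :
  top_equiv_at_infty (AP al be) (AP ga de) (AP al' be') (AP ga' de') <->
  (al / ga = al' / ga' /\
   cong_mod_1A (al / ga) ((be - de) / ga) ((be' - de') / ga')).
Proof.
  split.
  - apply top_equiv_AP_invariants; assumption.
  - intros [EA Hcong]. apply top_equiv_of_invariants; assumption.
Qed.
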